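(* Let $f$ be a Hamiltonian stationary torus. The real structure $\rho:\mathrm{Spec}\to\mathrm{Spec}$, $\rho(h)=\bar h$, induces the involutions $\rho:\mathbb C^2\to\mathbb C^2$, $(A,B)\mapsto(A,-B)$, and $\rho:\Gamma^*\to\Gamma^*$, $\delta\mapsto-\delta$ (i.e. $\overline{h^{A,B}}=h^{A,-B}$), so that $\rho(\Gamma^*_{A,B})=\Gamma^*_{A,-B}$, and the lines $\mathcal L$ are compatible with $\rho$, that is $$\rho^*\mathcal L_{A,\delta-B}:=\mathcal L_{A,-(\delta-B)}=\mathcal L_{A,\delta-B}\,j$$ for all $\delta\in\Gamma^*_{A,B}$.
   Context: Identify $\mathbb R^4$ with $\mathbb H$ and $\mathbb C$ with $\mathrm{span}_{\mathbb R}\{1,i\}$; $\langle\cdot,\cdot\rangle$ is the Euclidean inner product on $\mathbb C\cong\mathbb R^2$. $\Gamma\subset\mathbb C$ a lattice, $\Gamma^*$ its dual lattice. A Hamiltonian stationary torus is a $\Gamma$-periodic conformal immersion $f:\mathbb C\to\mathbb H$ with $df=e^{j\beta/2}dz\,g$, $dz=dx+i\,dy$, $g$ nowhere zero, $\beta(z)=2\pi\langle\beta_0,z\rangle$ with $0\ne\beta_0\in\Gamma^*$. Convention $*dz=i\,dz$; left normal $N=e^{j\beta}i$. $\alpha:\mathbb C\to\mathbb H$ is holomorphic if $*d\alpha=N\,d\alpha$; for a homomorphism $h:\Gamma\to\mathbb C_*$, $H^0_h$ denotes holomorphic $\alpha$ with $\alpha(z+\gamma)=\alpha(z)h(\gamma)$;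 $\mathrm{Spec}=\{h:H^0_h\ne0\}$. $h^{A,B}(\gamma)=e^{2\pi(\langle A,\gamma\rangle-i\langle B,\gamma\rangle)}$; $\Gamma^*_{A,B}=\{\delta\in\Gamma^*+\frac{\beta_0}2:|\delta-B|^2-|A|^2=\frac{|\beta_0|^2}4,\ \langle\delta-B,A\rangle=0\}$; $e_\delta(z)=e^{2\pi i\langle\delta,z\rangle}$; $\lambda_{A,\delta-B}=\frac2{\beta_0}(\delta-iA-B)$. For $\delta\in\Gamma^*_{A,B}$, $\mathcal L_{A,\delta-B}$ is the complex line (right $\mathbb C$-span) in $H^0_{h^{A,B}}$ spanned by the monochromatic holomorphic section $\alpha^{A,B}_\delta=e^{j\beta/2}(1-k\lambda_{A,\delta-B})e_{\delta-B}e^{2\pi\langle A,\cdot\rangle}$. *)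

From Stdlib Require Import Reals ZArith.
From Coquelicot Require Export Coquelicot.
Open Scope R_scope.

Record quat := Quat { qr : R; qi : R; qj : R; qk : R }.

Definition qadd (p q : quat) : quat :=
  Quat (qr p + qr q) (qi p + qi q) (qj p + qj q) (qk p + qk q).
Definition qopp (p : quat) : quat := Quat (- qr p) (- qi p) (- qj p) (- qk p).
Definition qsub (p q : quat) : quat := qadd p (qopp q).
(* Hamilton product: ij = k, jk = i, ki = j *)
Definition qmul (p q : quat) : quat :=
  Quat (qr p * qr q - qi p * qi q - qj p * qj q - qk p * qk q)
       (qr p * qi q + qi p * qr q + qj p * qk q - qk p * qj q)
       (qr p * qj q - qi p * qk q + qj p * qr q + qk p * qi q)
       (qr p * qk q + qi p * qj q - qj p * qi q + qk p * qr q).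

Definition qzero : quat := Quat 0 0 0 0.
Definition qone  : quat := Quat 1 0 0 0.
Definition qI    : quat := Quat 0 1 0 0.
Definition qJ    : quat := Quat 0 0 1 0.
Definition qK    : quat := Quat 0 0 0 1.

Definition C2H (z : C) : quat := Quat (Re z) (Im z) 0 0.

Definition qexpj (t : R) : quat := Quat (cos t) 0 (sin t) 0.

Definition inner (a b : C) : R := Re a * Re b + Im a * Im b.

Definition cexp (z : C) : C :=
  (exp (Re z) * cos (Im z), exp (Re z) * sin (Im z)).

Definition lattice (w1 w2 : C) (g : C) : Prop :=
  exists m n : Z, g = (RtoC (IZR m) * w1 + RtoC (IZR n) * w2)%C.

Definition lattice_basis (w1 w2 : C) : Prop := Im (Cconj w1 * w2)%C <> 0.

Definition dual_lattice (w1 w2 : C) (d : C) : Prop :=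
  forall g, lattice w1 w2 g -> exists n : Z, inner d g = IZR n.

Definition qderive (F : R -> quat) (x : R) (v : quat) : Prop :=
  is_derive (fun t => qr (F t)) x (qr v) /\ is_derive (fun t => qi (F t)) x (qi v) /\
  is_derive (fun t => qj (F t)) x (qj v) /\ is_derive (fun t => qk (F t)) x (qk v).

Definition qcontinuous (G : C -> quat) (z : C) : Prop :=
  continuous (fun w => qr (G w)) z /\ continuous (fun w => qi (G w)) z /\
  continuous (fun w => qj (G w)) z /\ continuous (fun w => qk (G w)) z.

Definition beta (b0 z : C) : R := 2 * PI * inner b0 z.

(* f : C -> H is a Gamma-periodic map with df = e^{j beta/2} dz g,
   dz = dx + i dy, g (continuous and) nowhere zero; i.e.
   d_x f = e^{j beta/2} g and d_y f = e^{j beta/2} i g. *)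
Definition ham_stat_torus (w1 w2 b0 : C) (f : C -> quat) : Prop :=
  lattice_basis w1 w2 /\
  dual_lattice w1 w2 b0 /\ b0 <> RtoC 0 /\
  (forall z g, lattice w1 w2 g -> f (z + g)%C = f z) /\
  exists g : C -> quat,
    (forall z, g z <> qzero) /\ (forall z, qcontinuous g z) /\
    (forall x y : R,
        qderive (fun t => f (t, y)) x (qmul (qexpj (beta b0 (x, y) / 2)) (g (x, y))) /\
        qderive (fun t => f (x, t)) y
                (qmul (qexpj (beta b0 (x, y) / 2)) (qmul qI (g (x, y))))).

Definition hAB (A B : C) (g : C) : C :=
  cexp (RtoC (2 * PI * inner A g) - Ci * RtoC (2 * PI * inner B g))%C.

Definition GammaStarAB (w1 w2 b0 A B : C) (d : C) : Prop :=
  dual_lattice w1 w2 (d - b0 / 2)%C /\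
  (Cmod (d - B)%C) ^ 2 - (Cmod A) ^ 2 = (Cmod b0) ^ 2 / 4 /\
  inner (d - B)%C A = 0.

Definition edelta (d z : C) : C := cexp (Ci * RtoC (2 * PI * inner d z))%C.

Definition lam (b0 A u : C) : C := (RtoC 2 / b0 * (u - Ci * A))%C.

(* the monochromatic section, indexed by (A, u) with u = delta - B:
   alpha^{A,B}_delta = e^{j beta/2} (1 - k lambda_{A,delta-B}) e_{delta-B} e^{2 pi <A,.>} *)
Definition alpha (b0 A u : C) (z : C) : quat :=
  qmul (qexpj (beta b0 z / 2))
    (qmul (qsub qone (qmul qK (C2H (lam b0 A u))))
          (C2H (edelta u z * RtoC (exp (2 * PI * inner A z)))%C)).

(* L_{A,u}: the complex line (right C-span) spanned by alpha *)
Definition Lline (b0 A u : C) (F : C -> quat) : Prop :=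
  exists c : C, forall z, F z = qmul (alpha b0 A u z) (C2H c).

Definition Lline_j (b0 A u : C) (F : C -> quat) : Prop :=
  exists G, Lline b0 A u G /\ F = (fun z => qmul (G z) qJ).

(* The involution rho is complex conjugation on everything built from C, and
   conjugation of a complex number w by the quaternion j, [w j = j conj(w)],
   realises it on the quaternionic side.  Multiplying the monochromatic
   section alpha_u by j therefore conjugates its two complex factors: the
   exponential [e_u e^{2 pi <A,.>}] becomes [e_{-u} e^{2 pi <A,.>}], and
   [(1 - k lambda_u) j] becomes [(1 - k lambda_{-u}) i conj(lambda_u)],
   because on Gamma^*_{A,B} the two defining equations say exactly that
   [lambda_u conj(lambda_{-u}) = -1].  Hence [alpha_u j] is a nonzero
   complex multiple of [alpha_{-u}], and the two complex lines agree. *)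

From Stdlib Require Import Reals Lra Psatz FunctionalExtensionality.
From Coquelicot Require Import Coquelicot.
Open Scope R_scope.

Lemma qmul_assoc (p q r : quat) : qmul p (qmul q r) = qmul (qmul p q) r.
Proof. destruct p, q, r; unfold qmul; simpl; f_equal; ring. Qed.

Lemma C2H_mul (a b : C) : qmul (C2H a) (C2H b) = C2H (a * b)%C.
Proof. destruct a, b; unfold qmul, C2H, Cmult; simpl; f_equal; ring. Qed.

Lemma C2H_mul_J (w : C) : qmul (C2H w) qJ = qmul qJ (C2H (Cconj w)).
Proof. destruct w; unfold qmul, C2H, qJ, Cconj; simpl; f_equal; ring. Qed.

Lemma qmul_C2H_J (q : quat) (a : C) :
  qmul (qmul q (C2H a)) qJ = qmul (qmul q qJ) (C2H (Cconj a)).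
Proof. rewrite <- !qmul_assoc, C2H_mul_J; reflexivity. Qed.

Lemma one_sub_K_mul_J (l1 l2 : C) : (l1 * Cconj l2 = - 1)%C ->
  qmul (qsub qone (qmul qK (C2H l1))) qJ =
  qmul (qsub qone (qmul qK (C2H l2))) (C2H (Ci * Cconj l1)%C).
Proof.
  destruct l1 as [a b], l2 as [p q]; intro H.
  unfold Cmult, Cconj, Copp, RtoC in H; simpl in H; injection H; intros.
  unfold qmul, qsub, qadd, qopp, qone, qK, qJ, C2H, Ci, Cmult, Cconj; simpl.
  f_equal; nra.
Qed.

Lemma inner_oppl (a b : C) : inner (- a) b = - inner a b.
Proof. destruct a, b; unfold inner; simpl; ring. Qed.

Lemma cexp_conj (z : C) : Cconj (cexp z) = cexp (Cconj z).
Proof.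
  destruct z as [x y]; unfold cexp, Cconj; simpl.
  rewrite cos_neg, sin_neg; f_equal; ring.
Qed.

Lemma edelta_conj (u z : C) : Cconj (edelta u z) = edelta (- u) z.
Proof.
  unfold edelta; rewrite cexp_conj, inner_oppl; f_equal.
  unfold Cconj, Cmult, Ci, RtoC; simpl; f_equal; ring.
Qed.

Lemma hAB_conj (A B g : C) : Cconj (hAB A B g) = hAB A (- B)%C g.
Proof.
  unfold hAB; rewrite cexp_conj, inner_oppl; f_equal.
  unfold Cconj, Cminus, Cplus, Copp, Cmult, Ci, RtoC; simpl; f_equal; ring.
Qed.

Lemma Cmult_sub_iconj_opp (u A : C) :
  ((u - Ci * A) * Cconj (- u - Ci * A))%C =
  (RtoC ((Cmod A) ^ 2 - (Cmod u) ^ 2) + Ci * RtoC (2 * inner u A))%C.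
Proof.
  destruct u as [u1 u2], A as [a1 a2]; unfold Cmod, inner; simpl.
  rewrite !Rmult_1_r, !sqrt_sqrt by nra.
  unfold Cmult, Cconj, Cminus, Cplus, Copp, Ci, RtoC; simpl; f_equal; ring.
Qed.

Lemma lam_mul_conj_lam_opp (b0 A u : C) : b0 <> 0 ->
  (Cmod u) ^ 2 - (Cmod A) ^ 2 = (Cmod b0) ^ 2 / 4 -> inner u A = 0 ->
  (lam b0 A u * Cconj (lam b0 A (- u)) = - 1)%C.
Proof.
  intros b0_neq0 Hnorm Hperp.
  assert (b0_pos : 0 < Cmod b0) by (apply Cmod_gt_0; exact b0_neq0).
  unfold lam; rewrite Cmult_conj.
  transitivity ((2 / b0 * Cconj (2 / b0)) * ((u - Ci * A) * Cconj (- u - Ci * A)))%C;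
    [ring |].
  rewrite <- Cmod2_conj, Cmod_div, Cmult_sub_iconj_opp, Hperp, Cmod_R, Rabs_pos_eq
    by (auto; lra).
  replace ((Cmod A) ^ 2 - (Cmod u) ^ 2) with (- (Cmod b0) ^ 2 / 4) by lra.
  unfold Cmult, Cplus, Ci, RtoC, Copp; simpl; f_equal; field; lra.
Qed.

Lemma alpha_mul_J (b0 A u z : C) :
  (lam b0 A u * Cconj (lam b0 A (- u)) = - 1)%C ->
  qmul (alpha b0 A u z) qJ =
  qmul (alpha b0 A (- u) z) (C2H (Ci * Cconj (lam b0 A u))%C).
Proof.
  intro Hlam; unfold alpha.
  rewrite <- !qmul_assoc, C2H_mul_J, Cmult_conj, edelta_conj.
  replace (Cconj (RtoC (exp (2 * PI * inner A z)))) with (RtoC (exp (2 * PI * inner A z)))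
    by (unfold Cconj, RtoC; simpl; f_equal; ring).
  rewrite (qmul_assoc (qsub qone _) qJ), one_sub_K_mul_J with (l2 := lam b0 A (- u))
    by exact Hlam.
  rewrite <- !qmul_assoc, !C2H_mul, Cmult_comm; reflexivity.
Qed.

Lemma Ci_mul_conj_neq0 (l : C) : l <> 0 -> (Ci * Cconj l)%C <> 0.
Proof.
  destruct l as [a b]; intros Hl H; apply Hl.
  unfold Cmult, Cconj, Ci, RtoC in H; simpl in H; injection H; intros.
  unfold RtoC; f_equal; lra.
Qed.

Lemma Lline_opp_iff_Lline_j (b0 A u c : C) : c <> 0 ->
  (forall z, qmul (alpha b0 A u z) qJ = qmul (alpha b0 A (- u) z) (C2H c)) ->
  forall F, Lline b0 A (- u)%C F <-> Lline_j b0 A u F.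
Proof.
  intros c_neq0 Halpha F; split.
  - intros [c0 HF].
    exists (fun z => qmul (alpha b0 A u z) (C2H (Cconj (c0 / c)))); split.
    + exists (Cconj (c0 / c)); reflexivity.
    + extensionality z.
      rewrite HF, qmul_C2H_J, Halpha, Cconj_conj, <- qmul_assoc, C2H_mul.
      replace (c * (c0 / c))%C with c0 by (field; exact c_neq0); reflexivity.
  - intros [G [[c1 HG] ->]].
    exists (c * Cconj c1)%C; intro z.
    rewrite HG, qmul_C2H_J, Halpha, <- qmul_assoc, C2H_mul; reflexivity.
Qed.

Lemma dual_lattice_opp (w1 w2 x : C) :
  dual_lattice w1 w2 x -> dual_lattice w1 w2 (- x)%C.
Proof.
  intros Hx g Hg; destruct (Hx g Hg) as [n Hn].
  exists (- n)%Z; rewrite opp_IZR, <- Hn, inner_oppl; reflexivity.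
Qed.

Lemma dual_lattice_add (w1 w2 x y : C) :
  dual_lattice w1 w2 x -> dual_lattice w1 w2 y -> dual_lattice w1 w2 (x + y)%C.
Proof.
  intros Hx Hy g Hg; destruct (Hx g Hg) as [m Hm], (Hy g Hg) as [n Hn].
  exists (m + n)%Z; rewrite plus_IZR, <- Hm, <- Hn.
  destruct x, y, g; unfold inner; simpl; ring.
Qed.

Lemma GammaStarAB_opp (w1 w2 b0 A B d : C) : dual_lattice w1 w2 b0 ->
  GammaStarAB w1 w2 b0 A B d -> GammaStarAB w1 w2 b0 A (- B)%C (- d)%C.
Proof.
  intros Hb0 [Hdual [Hnorm Hperp]].
  unfold GammaStarAB; replace (- d - - B)%C with (- (d - B))%C by ring.
  split; [| split].
  - replace (- d - b0 / 2)%C with (- (d - b0 / 2) + - b0)%C by field.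
    apply dual_lattice_add; apply dual_lattice_opp; assumption.
  - rewrite Cmod_opp; exact Hnorm.
  - rewrite inner_oppl, Hperp. ring.
Qed.

Theorem theorem2p11 (w1 w2 b0 : C) (f : C -> quat)
  (Hf : ham_stat_torus w1 w2 b0 f) (A B : C) :
  (forall g, lattice w1 w2 g -> Cconj (hAB A B g) = hAB A (- B)%C g) /\
  (forall d, GammaStarAB w1 w2 b0 A (- B)%C d <->
             exists d', GammaStarAB w1 w2 b0 A B d' /\ d = (- d')%C) /\
  (forall d, GammaStarAB w1 w2 b0 A B d ->
     forall F, Lline b0 A (- (d - B))%C F <-> Lline_j b0 A (d - B)%C F).
Proof.
  destruct Hf as [_ [Hb0 [b0_neq0 _]]].
  split; [| split].
  - intros g _; apply hAB_conj.
  - intro d; split.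
    + intro Hd; exists (- d)%C; split; [| ring].
      replace B with (- - B)%C by ring.
      apply GammaStarAB_opp; assumption.
    + intros [d' [Hd' ->]]; apply GammaStarAB_opp; assumption.
  - intros d [_ [Hnorm Hperp]].
    assert (Hlam := lam_mul_conj_lam_opp b0 A (d - B) b0_neq0 Hnorm Hperp).
    apply Lline_opp_iff_Lline_j with (c := (Ci * Cconj (lam b0 A (d - B)))%C).
    + apply Ci_mul_conj_neq0; intro Hzero.
      rewrite Hzero, Cmult_0_l in Hlam.
      injection Hlam; lra.
    + intro z; apply alpha_mul_J; exact Hlam.
Qed.
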